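(* Let $\Pi$ be a program with nested expressions, and let $Q$ be a set of atoms that do not have regular occurrences in the heads of the rules of $\Pi$. For every $q\in Q$ let $\mathit{Def}(q)$ be a formula. Then the program $\Pi\cup\{q\leftarrow\mathit{Def}(q): q\in Q\}$ has the same answer sets as the program $\Pi\cup\{q\leftrightarrow\mathit{Def}(q): q\in Q\}$.
   Context: A literal is an atom $a$ or $\neg a$ (classical negation); a set of literals is consistent if it contains no pair $a,\neg a$. Elementary formulas are literals, $\bot$, $\top$; formulas are built from them with $\mathit{not}$, '','' (conjunction), '';'' (disjunction). A rule with nested expressions is $\mathit{Head}\leftarrow\mathit{Body}$ with formulas; a program is a set of such rules. For consistent $Z$: $Z\models l$ iff $l\in Z$; $Z\models\top$; $Z\not\models\bot$; $Z\models(F,G)$ iff both; $Z\models(F;G)$ iff at least one; $Z\models\mathit{not}\,F$ iff $Z\not\models F$; $Z$ satisfies a program if for every rule $Z\models\mathit{Body}$ implies $Z\models\mathit{Head}$. Reduct: $F^Z=F$ for elementary $F$; $(F,G)^Z=F^Z,G^Z$; $(F;G)^Z=F^Z;G^Z$; $(\mathit{not}\,F)^Z=\bot$ if $Z\models F$, else $\top$; $\Pi^Z$ consists of the rules $\mathit{Head}^Z\leftarrow\mathit{Body}^Z$. $Z$ is an answer set of a $\mathit{not}$-free program if it is a minimal consistent set satisfying it, and of arbitrary $\Pi$ if it is an answer set of $\Pi^Z$. An occurrence of a formula $F$ in a formula or rule is singular if the symbol immediately before it is the classical negation $\neg$, and regular otherwise. $F\leftrightarrow G$ stands for the pair of rules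 $F\leftarrow G$ and $G\leftarrow F$. *)

From Stdlib Require Import Classical ClassicalEpsilon.

Set Implicit Arguments.

Section NE.
Variable A : Type.

(* literals: a or (classical negation) ¬a *)
Inductive lit : Type := Pos (a : A) | Neg (a : A).

Inductive formula : Type :=
| FLit (l : lit)
| FBot
| FTop
| FNot (F : formula)
| FAnd (F G : formula)
| FOr (F G : formula).

Record rule : Type := mkRule { head : formula ; body : formula }.

Definition program := rule -> Prop.
Definition litset := lit -> Prop.

Definition consistent (Z : litset) : Prop := forall a, ~ (Z (Pos a) /\ Z (Neg a)).

Fixpoint sat (Z : litset) (F : formula) : Prop :=
  match F with
  | FLit l => Z l
  | FBot => False
  | FTop => True
  | FNot G => ~ sat Z G
  | FAnd G H => sat Z G /\ sat Z H
  | FOr G H => sat Z G \/ sat Z H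
  end.

Definition sat_rule (Z : litset) (r : rule) : Prop := sat Z (body r) -> sat Z (head r).
Definition sat_prog (Z : litset) (P : program) : Prop := forall r, P r -> sat_rule Z r.

Fixpoint reduct (Z : litset) (F : formula) : formula :=
  match F with
  | FLit l => FLit l
  | FBot => FBot
  | FTop => FTop
  | FNot G => if excluded_middle_informative (sat Z G) then FBot else FTop
  | FAnd G H => FAnd (reduct Z G) (reduct Z H)
  | FOr G H => FOr (reduct Z G) (reduct Z H)
  end.

Definition reduct_rule (Z : litset) (r : rule) : rule :=
  mkRule (reduct Z (head r)) (reduct Z (body r)).

Definition reduct_prog (P : program) (Z : litset) : program :=
  fun r => exists r0, P r0 /\ r = reduct_rule Z r0.

Definition answer_set_nf (P : program) (Z : litset) : Prop :=
  consistent Z /\ sat_prog Z P /\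
  (forall Y : litset, consistent Y -> (forall l, Y l -> Z l) -> sat_prog Y P ->
     forall l, Z l -> Y l).

Definition answer_set (P : program) (Z : litset) : Prop :=
  answer_set_nf (reduct_prog P Z) Z.

(* an occurrence of atom q in F is regular iff it is not immediately preceded
   by ¬, i.e. iff it is the literal Pos q *)
Fixpoint occurs_regular (q : A) (F : formula) : Prop :=
  match F with
  | FLit (Pos a) => a = q
  | FLit (Neg _) => False
  | FBot | FTop => False
  | FNot G => occurs_regular q G
  | FAnd G H | FOr G H => occurs_regular q G \/ occurs_regular q H
  end.

Definition add_defs (P : program) (Q : A -> Prop) (Def : A -> formula) : program :=
  fun r => P r \/ exists q, Q q /\ r = mkRule (FLit (Pos q)) (Def q).

(* Π ∪ {q ↔ Def(q) : q ∈ Q}, where q ↔ Def(q) is the pair q ← Def(q), Def(q) ← q *)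
Definition add_equivs (P : program) (Q : A -> Prop) (Def : A -> formula) : program :=
  fun r => P r \/ exists q, Q q /\
    (r = mkRule (FLit (Pos q)) (Def q) \/ r = mkRule (Def q) (FLit (Pos q))).

End NE.

(* In the reduct, the two programs differ only by the rules Def(q)^Z <- q.
   A set Y satisfying the reduct with definitions alone can be shrunk to its
   supported part: keep an atom q of Q only if it lies in some subset S of Y
   that satisfies Def(q')^Z for each of its atoms q' of Q.  Not-free formulas
   are monotone, so the supported part still satisfies the definitions
   q <- Def(q)^Z and now also their converses; the rules of Pi survive
   because atoms of Q occur in their heads only under classical negation,
   i.e. as literals the shrinking does not remove.  Minimality of answer sets
   then makes the two programs interchangeable. *)

From Stdlib Require Import ClassicalEpsilon.

Section AnswerSets.
Variable A : Type.

Lemma sat_ext {S T : litset A} (F : formula A) :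
  (forall l, S l <-> T l) -> sat S F <-> sat T F.
Proof.
  intros HST; induction F; simpl; try tauto. apply HST.
Qed.

Lemma sat_prog_ext (S T : litset A) (P : program A) :
  (forall l, S l <-> T l) -> sat_prog S P -> sat_prog T P.
Proof.
  intros HST HS r Pr HTb. apply (sat_ext _ HST), (HS r Pr), (sat_ext _ HST), HTb.
Qed.

Lemma consistent_sub {Y Y' : litset A} :
  (forall l, Y' l -> Y l) -> consistent Y -> consistent Y'.
Proof. intros Hsub HY a [Hp Hn]. apply (HY a); split; apply Hsub; assumption. Qed.

Lemma answer_set_nf_equiv (P P' : program A) :
  (forall Y, sat_prog Y P' -> sat_prog Y P) ->
  (forall Y, sat_prog Y P ->
     exists Y', (forall l, Y' l -> Y l) /\ sat_prog Y' P') ->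
  forall Z, answer_set_nf P Z <-> answer_set_nf P' Z.
Proof.
  intros Hweak Hshrink Z; split; intros [HZc [HZs HZmin]].
  - destruct (Hshrink Z HZs) as [Z' [HZ'Z HZ's]].
    assert (HZZ' : forall l, Z l -> Z' l)
      by exact (HZmin Z' (consistent_sub HZ'Z HZc) HZ'Z (Hweak _ HZ's)).
    split; [exact HZc | split].
    + apply (sat_prog_ext Z'); [split; auto | exact HZ's].
    + intros Y HYc HYZ HYs. exact (HZmin Y HYc HYZ (Hweak _ HYs)).
  - split; [exact HZc | split; [exact (Hweak _ HZs) |]].
    intros Y HYc HYZ HYs l Zl.
    destruct (Hshrink Y HYs) as [Y' [HY'Y HY's]].
    apply HY'Y, (HZmin Y' (consistent_sub HY'Y HYc)); auto.
Qed.

Lemma sat_prog_antimono (Y : litset A) (P P' : program A) :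
  (forall r, P r -> P' r) -> sat_prog Y P' -> sat_prog Y P.
Proof. intros HPP' HY r Pr. exact (HY r (HPP' r Pr)). Qed.

Variable Z : litset A.

Lemma reduct_prog_mono (P P' : program A) r :
  (forall r, P r -> P' r) -> reduct_prog P Z r -> reduct_prog P' Z r.
Proof. intros HPP' [r0 [Pr0 ->]]. exists r0; auto. Qed.

Lemma sat_prog_reduct (P : program A) (Y : litset A) :
  sat_prog Y (reduct_prog P Z) <->
  (forall r, P r -> sat Y (reduct Z (body r)) -> sat Y (reduct Z (head r))).
Proof.
  split.
  - intros HY r Pr. apply (HY (reduct_rule Z r)). exists r; auto.
  - intros HY r [r0 [Pr0 ->]]. exact (HY r0 Pr0).
Qed.

Lemma sat_reduct_mono {S T : litset A} {F : formula A} :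
  (forall l, S l -> T l) -> sat S (reduct Z F) -> sat T (reduct Z F).
Proof.
  intros HST; induction F; simpl; auto.
  - destruct (excluded_middle_informative (sat Z F)); simpl; auto.
  - intros [HF1 HF2]; auto.
  - intros [HF1 | HF2]; auto.
Qed.

Lemma sat_reduct_transfer (Q : A -> Prop) (S T : litset A) (F : formula A) :
  (forall l, S l -> (forall q, Q q -> l <> Pos q) -> T l) ->
  (forall q, Q q -> ~ occurs_regular q F) ->
  sat S (reduct Z F) -> sat T (reduct Z F).
Proof.
  intros HST; induction F; simpl; intros Hreg; auto.
  - intros Sl. apply HST; [exact Sl |].
    intros q Hq ->. exact (Hreg q Hq eq_refl).
  - destruct (excluded_middle_informative (sat Z F)); simpl; auto.
  - intros [HF1 HF2]; split;
      [apply IHF1 | apply IHF2]; auto; intros q Hq Hocc; apply (Hreg q Hq); auto.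
  - intros [HF1 | HF2]; [left; apply IHF1 | right; apply IHF2]; auto;
      intros q Hq Hocc; apply (Hreg q Hq); auto.
Qed.

Variable Q : A -> Prop.
Variable Def : A -> formula A.

Definition supports_defs (S : litset A) : Prop :=
  forall q, Q q -> S (Pos q) -> sat S (reduct Z (Def q)).

Definition supported_part (Y : litset A) : litset A := fun l =>
  Y l /\ ((forall q, Q q -> l <> Pos q) \/
          exists S, (forall l', S l' -> Y l') /\ supports_defs S /\ S l).

Lemma supported_part_sub {Y} l : supported_part Y l -> Y l.
Proof. intros [Yl _]; exact Yl. Qed.

Lemma supports_defs_supported_part {Y} : supports_defs (supported_part Y).
Proof.
  intros q Hq [_ [Hnq | [S [HSY [HS Sq]]]]].
  - exfalso; exact (Hnq q Hq eq_refl).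
  - apply (sat_reduct_mono (S:=S)); [| exact (HS q Hq Sq)].
    intros l Sl. split; [auto | right; exists S; auto].
Qed.

(* The witnessing subset is the supported part itself with [Pos q] added. *)
Lemma supported_part_closed {Y q} :
  Q q -> Y (Pos q) -> sat (supported_part Y) (reduct Z (Def q)) ->
  supported_part Y (Pos q).
Proof.
  intros Hq Yq HDef. split; [exact Yq | right].
  exists (fun l => supported_part Y l \/ l = Pos q). split; [| split].
  - intros l [Wl | ->]; [exact (supported_part_sub _ Wl) | exact Yq].
  - intros q' Hq' Sq'. apply (sat_reduct_mono (S:=supported_part Y)); [auto |].
    destruct Sq' as [Wq' | Eq].
    + exact (supports_defs_supported_part q' Hq' Wq').
    + injection Eq as ->. exact HDef.
  - right; reflexivity.
Qed.

Variable Pi : program A.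
Hypothesis no_regular_head : forall q r, Q q -> Pi r -> ~ occurs_regular q (head r).

Lemma add_defs_sub_equivs r : add_defs Pi Q Def r -> add_equivs Pi Q Def r.
Proof. intros [Pr | [q [Hq ->]]]; [left | right; exists q]; auto. Qed.

Lemma sat_reduct_equivs_supported_part {Y} :
  sat_prog Y (reduct_prog (add_defs Pi Q Def) Z) ->
  sat_prog (supported_part Y) (reduct_prog (add_equivs Pi Q Def) Z).
Proof.
  rewrite !sat_prog_reduct. intros HY r [Pr | [q [Hq [-> | ->]]]]; simpl; intros Hbody.
  - apply (sat_reduct_transfer Q Y).
    + intros l Yl Hl. split; auto.
    + intros q Hq. exact (no_regular_head q r Hq Pr).
    + apply HY; [left; exact Pr |].
      exact (sat_reduct_mono supported_part_sub Hbody).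
  - apply supported_part_closed; [exact Hq | | exact Hbody].
    apply (HY (mkRule (FLit (Pos q)) (Def q))); [right; exists q; auto |].
    exact (sat_reduct_mono supported_part_sub Hbody).
  - exact (supports_defs_supported_part q Hq Hbody).
Qed.

End AnswerSets.

Theorem mainTheorem13 (A : Type) (Pi : program A) (Q : A -> Prop)
  (Def : A -> formula A) :
  (forall q r, Q q -> Pi r -> ~ occurs_regular q (head r)) ->
  forall Z : litset A,
    answer_set (add_defs Pi Q Def) Z <-> answer_set (add_equivs Pi Q Def) Z.
Proof.
  intros no_regular_head Z. apply answer_set_nf_equiv.
  - intros Y. apply sat_prog_antimono. intros r.
    apply reduct_prog_mono, add_defs_sub_equivs.
  - intros Y HY. eexists; split.
    + apply supported_part_sub.
    + apply sat_reduct_equivs_supported_part; assumption.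
Qed.
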